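(* Let $G$ be a graph with $N$ vertices and maximum degree $\Delta$, and let $R_{\max}$ be a positive integer. For each vertex subset $X$ with $\mathrm{diam}(X)\le R_{\max}$, let $h_X$ be an operator supported in $X$ (possibly zero, not necessarily Hermitian) with $h_X|W\rangle=h_X|\overline 0\rangle=0$. If for some $p\in\{0,\dots,N\}$ with $p\le N/(\Delta^{2R_{\max}}+1)$ one has $\left(\sum_{X:\mathrm{diam}(X)\le R_{\max}}h_X\right)|W^p\rangle=E'_p|W^p\rangle$ with $E'_p\in\mathbb{C}$, then $E'_p=0$.
   Context: System of $N$ qubits on the vertices of a graph $G$ with local basis $|0\rangle,|1\rangle$; $s_i^\dagger$ acts on vertex $i$ as $s^\dagger|0\rangle=|1\rangle$, $s^\dagger|1\rangle=0$; $|\overline 0\rangle=|0\rangle^{\otimes N}$. Distances are graph distances; for a vertex set $X$, $\mathrm{diam}(X)=1+\max_{i,j\in X}(\text{graph distance between }i,j)$. An operator is supported in $X$ if it acts as the identity outside $X$. $S^\dagger=\sum_i s_i^\dagger$; for $p=0,\dots,N$, $|W^p\rangle$ is the normalization of $(S^\dagger)^p|\overline 0\rangle$ (the equal-weight superposition of all basis states with exactly $p$ vertices in state $|1\rangle$), and $|W\rangle=|W^1\rangle$. *)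

From HB Require Import structures.
From mathcomp Require Import all_boot all_order all_algebra.
Set Implicit Arguments. Unset Strict Implicit. Unset Printing Implicit Defensive.
Import Order.TTheory GRing.Theory Num.Theory.
Local Open Scope ring_scope.

Section Defs.
Variable T : finType.

Definition simple_graph (e : rel T) := symmetric e /\ irreflexive e.

Definition max_degree (e : rel T) : nat := (\max_(i : T) #|[set j | e i j]|)%N.

Fixpoint ball (e : rel T) (d : nat) (i : T) : {set T} :=
  match d with
  | 0 => [set i]
  | d'.+1 => ball e d' i :|: [set j | [exists k in ball e d' i, e k j]]
  end.

(* diam(X) <= R, where diam(X) = 1 + max_{i,j in X} dist(i,j)
   (infinite distance between different components). *)
Definition diam_le (e : rel T) (X : {set T}) (R : nat) : bool :=
  [forall i in X, forall j in X, (0 < R)%N && (j \in ball e R.-1 i)].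

(* Computational basis states of N = #|T| qubits. *)
Definition basis := {ffun T -> bool}.

Variable C : numClosedFieldType.

(* Vectors (amplitudes) and operators (matrix kernels) on (C^2)^{\otimes N}. *)
Definition state := basis -> C.
Definition operator := basis -> basis -> C.

Definition apply (H : operator) (v : state) : state :=
  fun x => \sum_(y : basis) H x y * v y.

(* H is supported in X: H = h_X \otimes Id_{complement of X}. *)
Definition supported_in (X : {set T}) (H : operator) : Prop :=
  exists g : basis -> basis -> C,
    (forall x x' y y' : basis, (forall i, i \in X -> x i = x' i) ->
                       (forall i, i \in X -> y i = y' i) -> g x y = g x' y') /\
    (forall x y, H x y = if [forall i in ~: X, x i == y i] then g x y else 0).

Definition weight (x : basis) : nat := #|[set i | x i]|.

Definition Wp (p : nat) : state :=
  fun x => if weight x == p then (sqrtC ('C(#|T|, p))%:R)^-1 else 0.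

Definition W : state := Wp 1.

Definition zero_state : state := fun x => if weight x == 0%N then 1 else 0.

Definition zero_vec : state := fun _ => 0.

End Defs.

(* Pick p vertices that are pairwise further apart than any admissible X can
   reach; this is possible greedily because a ball of radius Rmax - 1 has at
   most Delta^(2 Rmax) + 1 vertices.  Let x be the basis state exciting exactly
   these vertices.  Each X then contains at most one excitation of x, and since
   h_X acts only on X, the amplitude <x| h_X |W^p> equals, up to a nonzero
   normalisation, <x_X| h_X |0> or <x_X| h_X |W>, where x_X is x with the
   excitations outside X removed.  Both vanish, so <x| H |W^p> = 0, whereas
   E'_p <x|W^p> = E'_p / sqrt(binomial N p). *)
From mathcomp Require Import all_boot all_order all_algebra zify.
Import GRing.Theory Num.Theory.
Set Implicit Arguments. Unset Strict Implicit. Unset Printing Implicit Defensive.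

Section Balls.
Variables (T : finType) (e : rel T).

Lemma card_adj_le_max_degree i : #|[set j | e i j]| <= max_degree e.
Proof. exact: (leq_bigmax (F := fun i => #|[set j | e i j]|)). Qed.

Lemma ball_center d i : i \in ball e d i.
Proof. by elim: d => [|d IH] /=; rewrite !inE ?IH. Qed.

Lemma in_ballS d i j :
  (j \in ball e d.+1 i) = (j \in ball e d i) || [exists k in ball e d i, e k j].
Proof. by rewrite /= !inE. Qed.

Lemma ballS_adj d i k j : e i k -> j \in ball e d k -> j \in ball e d.+1 i.
Proof.
move=> eik; elim: d j => [|d IH] j.
  by rewrite /= !inE => /eqP ->; apply/orP; right; apply/existsP; exists i; rewrite inE eqxx.
rewrite in_ballS => /orP [jB | /existsP [m /andP [mB emj]]]; first by rewrite in_ballS IH.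
by rewrite in_ballS; apply/orP; right; apply/existsP; exists m; rewrite IH.
Qed.

Lemma card_adj_set (B : {set T}) :
  #|[set j | [exists k in B, e k j]]| <= #|B| * max_degree e.
Proof.
have -> : [set j | [exists k in B, e k j]] = \bigcup_(k in B) [set j | e k j].
  apply/setP => j; rewrite inE; apply/existsP/bigcupP => [[k /andP [kB ekj]] | [k kB]].
    by exists k; rewrite ?inE.
  by rewrite inE => ekj; exists k; rewrite kB.
apply: (@leq_trans (\sum_(k in B) #|[set j | e k j]|)).
  apply: (big_ind2 (fun (A : {set T}) n => #|A| <= n)); first by rewrite cards0.
    by move=> A1 n1 A2 n2 h1 h2; apply: leq_trans (leq_card_setU _ _) (leq_add h1 h2).
  by [].
by rewrite -sum_nat_const; apply: leq_sum => k _; apply: card_adj_le_max_degree.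
Qed.

Lemma card_ball d i : #|ball e d i| <= (max_degree e).+1 ^ d.
Proof.
elim: d => [|d IH] /=; first by rewrite cards1.
apply: leq_trans (leq_card_setU _ _) _; rewrite expnS mulSn.
have := card_adj_set (ball e d i).
have : #|ball e d i| * max_degree e <= (max_degree e).+1 ^ d * max_degree e.
  by rewrite leq_mul2r IH orbT.
by move: IH; lia.
Qed.

Hypothesis e_sym : symmetric e.

Lemma ball_sym d i j : j \in ball e d i -> i \in ball e d j.
Proof.
elim: d i j => [|d IH] i j; first by rewrite /= !inE => /eqP ->.
rewrite in_ballS => /orP [jB | /existsP [k /andP [kB ekj]]]; first by rewrite in_ballS IH.
by apply: (@ballS_adj _ _ k); [rewrite e_sym | apply: IH].
Qed.

Lemma ball_sub_adj_max_degree_le1 d i :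
  max_degree e <= 1 -> ball e d i \subset i |: [set j | e i j].
Proof.
move=> deg1; elim: d => [|d IH] /=; first by rewrite sub1set setU11.
apply/subsetP => j; rewrite !inE => /orP [jB | /existsP [k /andP [kB ekj]]].
  by move/subsetP: IH => /(_ j jB); rewrite !inE.
move/subsetP: IH => /(_ k kB); rewrite !inE => /orP [/eqP <- | eik]; first by rewrite ekj orbT.
(* k has the two neighbours i and j, so they coincide *)
have /card_le1P adj_k := leq_trans (card_adj_le_max_degree k) deg1.
have := adj_k i; rewrite !inE e_sym eik => /(_ isT j).
by rewrite !inE ekj => /esym/eqP ->; rewrite eqxx.
Qed.

Lemma card_ball_le R i :
  0 < R -> #|ball e R.-1 i| <= max_degree e ^ (2 * R) + 1.
Proof.
move=> R_gt0; have [deg1 | deg2] := leqP (max_degree e) 1.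
  apply: leq_trans (subset_leq_card (ball_sub_adj_max_degree_le1 R.-1 i deg1)) _.
  have -> : max_degree e ^ (2 * R) = max_degree e.
    by case: (max_degree e) deg1 => [|[|//]] _; rewrite ?exp1n ?exp0n ?muln_gt0.
  by rewrite cardsU1 addnC leq_add ?leq_b1 ?card_adj_le_max_degree.
apply: leq_trans (card_ball _ _) (leq_trans _ (leq_addr 1 _)).
have sq : (max_degree e).+1 ^ R.-1 <= (max_degree e ^ 2) ^ R.-1.
  by case: R.-1 => [//|r]; rewrite leq_exp2r // expnS expn1; nia.
by apply: leq_trans sq _; rewrite -expnM leq_exp2l //; lia.
Qed.

(* greedy: pick a vertex of S and recurse on S minus its ball *)
Lemma exists_ball_packing R B p (S : {set T}) :
  0 < B -> (forall i, #|ball e R i| <= B) -> p * B <= #|S| ->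
  exists P : {set T}, [/\ P \subset S, #|P| = p &
    forall i j, i \in P -> j \in P -> i != j -> j \notin ball e R i].
Proof.
move=> B_gt0 ballB; elim: p S => [|p IH] S pS.
  by exists set0; split; rewrite ?sub0set ?cards0 // => i j; rewrite inE.
have /card_gt0P [i iS] : 0 < #|S| by apply: leq_trans pS; rewrite muln_gt0 B_gt0.
have pS' : p * B <= #|S :\: ball e R i|.
  have := subset_leq_card (subsetIr S (ball e R i)).
  by rewrite cardsD; move: pS (ballB i); rewrite mulSn; lia.
have [P [PS cardP packP]] := IH _ pS'.
have iP : i \notin P by apply/negP => /(subsetP PS); rewrite inE ball_center.
have PSi j : j \in P -> j \notin ball e R i.
  by move=> /(subsetP PS); rewrite inE => /andP [].
exists (i |: P); split; first by rewrite subUset sub1set iS (subset_trans PS) ?subsetDl.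
  by rewrite cardsU1 iP cardP.
move=> a b; rewrite !inE => /orP [/eqP -> | aP] /orP [/eqP -> | bP]; rewrite ?eqxx //.
- by move=> _; apply: PSi.
- by move=> _; apply/negP => /ball_sym; apply/negP; apply: PSi.
- exact: packP.
Qed.

Lemma diam_le_card_packing R (X P : {set T}) :
  diam_le e X R -> (forall i j, i \in P -> j \in P -> i != j -> j \notin ball e R.-1 i) ->
  #|X :&: P| <= 1.
Proof.
move=> /forallP diamX packP; rewrite leqNgt; apply/card_gt1P => -[a [b []]].
rewrite !inE => /andP [aX aP] /andP [bX bP] ab.
have /forallP /(_ b) := implyP (diamX a) aX.
by rewrite bX => /andP [_]; apply/negP/packP.
Qed.

End Balls.

Local Open Scope ring_scope.

Section LocalOperators.
Variables (T : finType) (C : numClosedFieldType).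
Implicit Types (x y z : basis T) (X : {set T}) (H : operator T C).

Definition dicke k : state T C := fun y => if weight y == k then 1 else 0.

Definition agree_out X x y := [forall i in ~: X, x i == y i].
Definition restr X x : basis T := [ffun i => (i \in X) && x i].
Definition merge X x y : basis T := [ffun i => if i \in X then y i else x i].

Lemma agree_outP X x y : agree_out X x y -> forall i, i \notin X -> x i = y i.
Proof. by move=> /forallP agr i iX; have := agr i; rewrite inE iX => /eqP. Qed.

Lemma weight_agree_out X x y : agree_out X x y ->
  weight y = (weight (restr X y) + #|[set i | x i] :\: X|)%N.
Proof.
move=> agr; rewrite /weight -(cardsID X [set i | y i]); congr (_ + _)%N.
  by apply: eq_card => i; rewrite !inE ffunE andbC.
by apply: eq_card => i; rewrite !inE; case iX: (i \in X); rewrite // (agree_outP agr) ?iX.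
Qed.

Lemma apply_Wp H k x :
  apply H (Wp C k) x = (sqrtC 'C(#|T|, k)%:R)^-1 * apply H (dicke k) x.
Proof.
rewrite /apply mulr_sumr; apply: eq_bigr => y _; rewrite /Wp /dicke mulrCA.
by case: eqP; rewrite ?mulr1 ?mulr0.
Qed.

Lemma Wp_norm_neq0 k : (k <= #|T|)%N -> (sqrtC 'C(#|T|, k)%:R : C)^-1 != 0.
Proof. by move=> kT; rewrite invr_eq0 sqrtC_eq0 pnatr_eq0 -lt0n bin_gt0. Qed.

(* Excitations outside X are spectators: removing them lowers the excitation
   number on both sides by the same amount. *)
Lemma supported_apply_dicke X H (k : nat) z : supported_in X H ->
  apply H (dicke (k + #|[set i | z i] :\: X|)%N) z = apply H (dicke k) (restr X z).
Proof.
move=> [g [g_loc Hg]].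
have sumE x m : apply H (dicke m) x = \sum_(y | agree_out X x y && (weight y == m)) g x y.
  rewrite /apply /dicke [RHS]big_mkcond /=; apply: eq_bigr => y _.
  by rewrite Hg -/(agree_out X x y); case: agree_out; case: eqP; rewrite ?mulr1 ?mulr0.
rewrite !sumE [RHS](reindex_onto (restr X) (merge X z)) /=; last first.
  move=> y /andP [agr _]; apply/ffunP => i; rewrite !ffunE.
  by case iX: (i \in X); rewrite // -(agree_outP agr) ?iX // ffunE iX.
apply: eq_big => y; last first.
  by move=> /andP [agr _]; apply: g_loc => i iX; rewrite ffunE iX.
case agr: (agree_out X z y).
  have -> : merge X z (restr X y) == y.
    apply/eqP/ffunP => i; rewrite !ffunE.
    by case iX: (i \in X); rewrite // (agree_outP agr) ?iX.
  have -> : agree_out X (restr X z) (restr X y).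
    by apply/forallP => i; rewrite inE !ffunE; case: (i \in X).
  by rewrite (weight_agree_out agr) eqn_add2r andbT.
apply/esym/negbTE/negP => /andP [_ /eqP zy]; move/negP: agr; apply.
apply/forallP => i; apply/implyP; rewrite inE => iX.
by rewrite -zy ffunE (negbTE iX).
Qed.

Lemma supported_apply_Wp_eq0 X H z : supported_in X H ->
  apply H (W C) = zero_vec C -> apply H (zero_state C) = zero_vec C ->
  (#|X :&: [set i | z i]| <= 1)%N -> apply H (Wp C (weight z)) z = 0.
Proof.
move=> suppH HW H0 Xz.
have wX : weight (restr X z) = #|X :&: [set i | z i]|.
  by apply: eq_card => i; rewrite !inE ffunE.
have agr_z : agree_out X z z by apply/forallP => i; rewrite eqxx implybT.
rewrite apply_Wp (weight_agree_out agr_z) supported_apply_dicke // wX.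
suff -> : apply H (dicke #|X :&: [set i | z i]|) (restr X z) = 0 by rewrite mulr0.
move: wX Xz; case: #|_| => [|[|//]] wX _.
  by have := congr1 (fun f => f (restr X z)) H0.
have T_gt0 : (0 < #|T|)%N.
  by apply: leq_trans (max_card (mem [set i | restr X z i])); rewrite -/(weight _) wX.
have := congr1 (fun f => f (restr X z)) HW.
rewrite /W apply_Wp => /eqP; rewrite mulf_eq0 => /orP [|/eqP //].
by rewrite (negbTE (Wp_norm_neq0 T_gt0)).
Qed.

Lemma apply_sum (I : finType) (P : pred I) (H : I -> operator T C) v x :
  apply (fun x y => \sum_(i | P i) H i x y) v x = \sum_(i | P i) apply (H i) v x.
Proof.
by rewrite /apply exchange_big /=; apply: eq_bigr => y _; rewrite mulr_suml.
Qed.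

End LocalOperators.

Theorem proposition5 (T : finType) (e : rel T) (C : numClosedFieldType)
  (Rmax : nat) (h : {set T} -> operator T C) (p : nat) (E : C) :
  simple_graph e ->
  (0 < Rmax)%N ->
  (forall X : {set T}, diam_le e X Rmax ->
     supported_in X (h X) /\
     apply (h X) (@W T C) = @zero_vec T C /\
     apply (h X) (@zero_state T C) = @zero_vec T C) ->
  (p <= #|T|)%N ->
  (p * ((max_degree e) ^ (2 * Rmax) + 1) <= #|T|)%N ->
  apply (fun x y => \sum_(X : {set T} | diam_le e X Rmax) h X x y) (@Wp T C p)
    = (fun x => E * @Wp T C p x) ->
  E = 0.
Proof.
move=> [e_sym _] Rmax_gt0 hX pT pN eigen.
have ball_gt0 : (0 < max_degree e ^ (2 * Rmax) + 1)%N by rewrite addn1.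
rewrite -cardsT in pN.
have [P [_ cardP packP]] :=
  exists_ball_packing e_sym ball_gt0 (fun i => card_ball_le e_sym i Rmax_gt0) pN.
pose x : basis T := [ffun i => i \in P].
have Px : [set i | x i] = P by apply/setP => i; rewrite inE ffunE.
have wx : weight x = p by rewrite /weight Px.
have := congr1 (fun f => f x) eigen; rewrite apply_sum big1 => [/esym/eqP|X diamX].
  by rewrite mulf_eq0 /Wp wx eqxx (negbTE (Wp_norm_neq0 _ pT)) orbF => /eqP.
have [suppX [hW h0]] := hX X diamX.
rewrite -wx (supported_apply_Wp_eq0 suppX hW h0) // Px.
exact: diam_le_card_packing diamX packP.
Qed.
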